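(* Let $C$ be a concurrent vertex map with straight road map $(\{H^\alpha_p\},\{V^\beta_q\})$. (a) Let $\alpha\in V_{\rm target}$ and $1\le p\le u_\alpha$. Then the row coordinate of $P^\alpha_{pq'}$ is $p$ for all $q'\ge p+1+v_\alpha-u_\alpha$, and the row coordinate of $Q^\alpha_{pq'}$ is $p$ for all $q'\ge p+v_\alpha-u_\alpha$ (with $q'\le v_\alpha$). Consequently, for $q'\ge p+1+v_\alpha-u_\alpha$, the subpath $P^\alpha_{pq'}\rightsquigarrow Q^\alpha_{pq'}$ contains no horizontal NW corner, and $P^\alpha_{pq'}+(1,0)=Q^\alpha_{p+1,q'}$. (b) Let $\beta\in V_{\rm source}$ and $1\le q\le u_\beta$. Then the column coordinate of $Q^\beta_{p'q}$ is $q$ for all $p'\ge q+1+v_\beta-u_\beta$, and the column coordinate of $P^\beta_{p'q}$ is $q$ for all $p'\ge q+v_\beta-u_\beta$ (with $p'\le v_\beta$). Consequently, for $p'\ge q+1+v_\beta-u_\beta$, the subpath $Q^\beta_{p'q}\rightsquigarrow P^\beta_{p'q}$ contains no vertical NW corner, and $Q^\beta_{p'q}+(0,1)=P^\beta_{p',q+1}$.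
   Context: Let $\mathcal{Q}$ be a bipartite quiver with vertex set $V_{\mathcal{Q}}=V_{\rm source}\sqcup V_{\rm target}$ and arrows $h_1,\dots,h_r$, each $h_k$ from $\mathrm{s}(h_k)\in V_{\rm source}$ to $\mathrm{t}(h_k)\in V_{\rm target}$. Let $\mathbf{m}=(m_\gamma)$, $\mathbf{u}=(u_\gamma)$ be tuples of nonnegative integers indexed by $V_{\mathcal{Q}}$. For $k=1,\dots,r$ let $X^{(k)}$ be an $m_{\mathrm{t}(h_k)}\times m_{\mathrm{s}(h_k)}$ matrix of variables $x^{(k)}_{ij}$ (page $k$). For $\alpha\in V_{\rm target}$ with $r_1<\dots<r_s$ the indices of arrows with target $\alpha$, $A_\alpha=[X^{(r_1)}|\cdots|X^{(r_s)}]$; for $\beta\in V_{\rm source}$ with $r'_1<\dots<r'_t$ the indices of arrows with source $\beta$, $A_\beta$ is the stack of $X^{(r'_1)},\dots,X^{(r'_t)}$ top to bottom. $a_\gamma\times b_\gamma$ is the size of $A_\gamma$; $v_\alpha=\sum_{k:\mathrm{t}(h_k)=\alpha}u_{\mathrm{s}(h_k)}$, $v_\beta=\sum_{k:\mathrm{s}(h_k)=\beta}u_{\mathrm{t}(h_k)}$. Standing assumption: $0<u_\gamma\le\min(a_\gamma,b_\gamma)$, $u_\alpha\le v_\alpha$, $u_\beta\le v_\beta$. $L=\{(i,j,k):1\le k\le r,1\le i\le m_{\mathrm{t}(h_k)},1\le j\le m_{\mathrm{s}(h_k)}\}$; $\phi_\gamma$ sends a position $(p,q)$ of $A_\gamma$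 to $(i,j,k)$ if that entry is $x^{(k)}_{ij}$. Coordinates $(i,j)$: $i$ row (downward, north = decreasing $i$), $j$ column (eastward). Paths: lattice paths with unit steps east $(0,1)$ or north $(-1,0)$ from SW endpoint to NE endpoint; nonintersecting = no shared vertex. A corner $R$ is a NW corner if $R+(1,0),R+(0,1)$ are on the path. A road map: for each $\alpha$ nonintersecting paths $H^\alpha_1,\dots,H^\alpha_{u_\alpha}$ in $A_\alpha$, $H^\alpha_p$ with endpoints $(a_\alpha-u_\alpha+p,1)$, $(p,b_\alpha)$; for each $\beta$ nonintersecting paths $V^\beta_1,\dots,V^\beta_{u_\beta}$ in $A_\beta$, $V^\beta_q$ with endpoints $(1,b_\beta-u_\beta+q)$, $(a_\beta,q)$; vertices are regarded as points of $L$ via $\phi_\gamma$. Straight: each corner of a horizontal path lies on a vertical path and vice versa. A concurrent vertex map is a set $C\subseteq L$ which, for some straight road map (its road map), equals the set of $(i,j,k)$ lying on some $H^{\mathrm{t}(h_k)}_p$ and some $V^{\mathrm{s}(h_k)}_q$. For $\alpha$, the paths $V^{\mathrm{s}(h_{r_1})}_1,\dots,V^{\mathrm{s}(h_{r_1})}_{u_{\mathrm{s}(h_{r_1})}},\dots,V^{\mathrm{s}(h_{r_s})}_{u_{\mathrm{s}(h_{r_s})}}$, restricted to their pages and transported into $A_\alpha$ via $\phi_\alpha^{-1}\circ\phi_{\mathrm{s}(h_{r_\ell})}$, are called $V^\alpha_1,\dots,V^\alpha_{v_\alpha}$ in this order; $H^\alpha_p\cap V^\alpha_q$ is a nonempty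 connected subpath with SW endpoint $P^\alpha_{pq}$ and NE endpoint $Q^\alpha_{pq}$ (coordinates taken in $A_\alpha$). Symmetrically for $\beta$, the paths $H^{\mathrm{t}(h_{r'_1})}_1,\dots,H^{\mathrm{t}(h_{r'_t})}_{u_{\mathrm{t}(h_{r'_t})}}$ transported into $A_\beta$ are $H^\beta_1,\dots,H^\beta_{v_\beta}$, and $P^\beta_{pq},Q^\beta_{pq}$ are the SW and NE endpoints of $H^\beta_p\cap V^\beta_q$ (coordinates in $A_\beta$). A horizontal NW corner is a point of $C$ of the form $\phi_\alpha(P)$ with $P$ a NW corner of some $H^\alpha_p$; a vertical NW corner is $\phi_\beta(P)$ with $P$ a NW corner of some $V^\beta_q$; a subpath ''contains'' such a corner if the corresponding point $P$ lies on it. *)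

From mathcomp Require Import all_boot.

(* Bipartite quiver data: sources are 'I_nS, targets 'I_nT, arrows h_k are
   k : 'I_nr (arrow h_{k+1} of the paper), from src k to tgt k.
   All matrix coordinates below are 1-based, as in the paper:
   (i, j) = (row, column), north = decreasing i, east = increasing j. *)
Record qdata := QData {
  nS : nat; nT : nat; nr : nat;
  src : 'I_nr -> 'I_nS; tgt : 'I_nr -> 'I_nT;
  mS : 'I_nS -> nat; mT : 'I_nT -> nat;
  uS : 'I_nS -> nat; uT : 'I_nT -> nat }.

Definition pos := (nat * nat)%type.

Definition Lpt (Q : qdata) := (nat * nat * 'I_(nr Q))%type.

Definition lstep (x y : pos) : bool :=
  ((y.1 == x.1) && (y.2 == x.2.+1)) || ((y.1.+1 == x.1) && (y.2 == x.2)).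

Definition inbox (a b : nat) (x : pos) : bool := (0 < x.1 <= a) && (0 < x.2 <= b).

Definition lattice_path_def (a b : nat) (sw ne : pos) (P : seq pos) : bool :=
  if P is x :: P' then [&& x == sw, path lstep x P', last x P' == ne & all (inbox a b) P]
  else false.

Definition nw_corner (R : pos) (P : seq pos) : bool :=
  infix [:: (R.1.+1, R.2); R; (R.1, R.2.+1)] P.
Definition se_corner (R : pos) (P : seq pos) : bool :=
  infix [:: (R.1, R.2.-1); R; (R.1.-1, R.2)] P.
Definition corner (R : pos) (P : seq pos) : bool := nw_corner R P || se_corner R P.

Definition subpath_of (s : seq pos) (x y : pos) : seq pos :=
  drop (index x s) (take (index y s).+1 s).

Section Defs.
Variable Q : qdata.

Definition arrT (a : 'I_(nT Q)) : seq 'I_(nr Q) :=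
  [seq k <- enum 'I_(nr Q) | tgt Q k == a].
Definition arrS (b : 'I_(nS Q)) : seq 'I_(nr Q) :=
  [seq k <- enum 'I_(nr Q) | src Q k == b].

(* sizes a_gamma x b_gamma of A_gamma, and v_gamma *)
Definition aT a := mT Q a.
Definition bT a := \sum_(k <- arrT a) mS Q (src Q k).
Definition aS b := \sum_(k <- arrS b) mT Q (tgt Q k).
Definition bS b := mS Q b.
Definition vT a := \sum_(k <- arrT a) uS Q (src Q k).
Definition vS b := \sum_(k <- arrS b) uT Q (tgt Q k).

(* column offset of page k inside A_{t(h_k)}; row offset inside A_{s(h_k)} *)
Definition colOff (k : 'I_(nr Q)) : nat :=
  \sum_(k' <- arrT (tgt Q k) | k' < k) mS Q (src Q k').
Definition rowOff (k : 'I_(nr Q)) : nat :=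
  \sum_(k' <- arrS (src Q k) | k' < k) mT Q (tgt Q k').

Definition inL (x : Lpt Q) : bool :=
  (0 < x.1.1 <= mT Q (tgt Q x.2)) && (0 < x.1.2 <= mS Q (src Q x.2)).

(* psiT x = phi_{t(h_k)}^{-1}(x), psiS x = phi_{s(h_k)}^{-1}(x) *)
Definition psiT (x : Lpt Q) : pos := (x.1.1, colOff x.2 + x.1.2).
Definition psiS (x : Lpt Q) : pos := (rowOff x.2 + x.1.1, x.1.2).

Definition standing : Prop :=
  (forall a, 0 < uT Q a <= minn (aT a) (bT a) /\ uT Q a <= vT a) /\
  (forall b, 0 < uS Q b <= minn (aS b) (bS b) /\ uS Q b <= vS b).

Variable H : 'I_(nT Q) -> nat -> seq pos.
Variable V : 'I_(nS Q) -> nat -> seq pos.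

Definition road_map : Prop :=
  (forall a p, 0 < p <= uT Q a ->
     lattice_path_def (aT a) (bT a) (aT a - uT Q a + p, 1) (p, bT a) (H a p)) /\
  (forall a p p', 0 < p -> p < p' -> p' <= uT Q a ->
     ~~ has (fun x => x \in H a p') (H a p)) /\
  (forall b q, 0 < q <= uS Q b ->
     lattice_path_def (aS b) (bS b) (aS b, q) (1, bS b - uS Q b + q) (V b q)) /\
  (forall b q q', 0 < q -> q < q' -> q' <= uS Q b ->
     ~~ has (fun x => x \in V b q') (V b q)).

Definition straight : Prop :=
  (forall a p R, 0 < p <= uT Q a -> corner R (H a p) ->
     exists x : Lpt Q, [/\ inL x, tgt Q x.2 = a, psiT x = R &
       exists q, 0 < q <= uS Q (src Q x.2) /\ psiS x \in V (src Q x.2) q]) /\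
  (forall b q R, 0 < q <= uS Q b -> corner R (V b q) ->
     exists x : Lpt Q, [/\ inL x, src Q x.2 = b, psiS x = R &
       exists p, 0 < p <= uT Q (tgt Q x.2) /\ psiT x \in H (tgt Q x.2) p]).

Definition inC (x : Lpt Q) : Prop :=
  inL x /\
  (exists p, 0 < p <= uT Q (tgt Q x.2) /\ psiT x \in H (tgt Q x.2) p) /\
  (exists q, 0 < q <= uS Q (src Q x.2) /\ psiS x \in V (src Q x.2) q).

(* restriction of a path of A_{s(h_k)} to page k, transported into A_{t(h_k)} *)
Definition VtoT (k : 'I_(nr Q)) (P : seq pos) : seq pos :=
  [seq (x.1 - rowOff k, colOff k + x.2) |
     x <- P & rowOff k < x.1 <= rowOff k + mT Q (tgt Q k)].
(* restriction of a path of A_{t(h_k)} to page k, transported into A_{s(h_k)} *)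
Definition HtoS (k : 'I_(nr Q)) (P : seq pos) : seq pos :=
  [seq (rowOff k + x.1, x.2 - colOff k) |
     x <- P & colOff k < x.2 <= colOff k + mS Q (src Q k)].

Definition VTs (a : 'I_(nT Q)) : seq (seq pos) :=
  flatten [seq [seq VtoT k (V (src Q k) q) | q <- iota 1 (uS Q (src Q k))] | k <- arrT a].
Definition VT (a : 'I_(nT Q)) (q : nat) : seq pos := nth [::] (VTs a) q.-1.
Definition HSs (b : 'I_(nS Q)) : seq (seq pos) :=
  flatten [seq [seq HtoS k (H (tgt Q k) p) | p <- iota 1 (uT Q (tgt Q k))] | k <- arrS b].
Definition HS (b : 'I_(nS Q)) (p : nat) : seq pos := nth [::] (HSs b) p.-1.

(* P^alpha_{pq}, Q^alpha_{pq}: SW / NE endpoints of H^alpha_p \cap V^alpha_q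
   (first / last common point along H^alpha_p, listed from SW to NE) *)
Definition PT a p q : pos := head (0, 0) [seq x <- H a p | x \in VT a q].
Definition QT a p q : pos := last (0, 0) [seq x <- H a p | x \in VT a q].
(* P^beta_{pq}, Q^beta_{pq}: SW / NE endpoints of H^beta_p \cap V^beta_q
   (first / last common point along V^beta_q, listed from SW to NE) *)
Definition PS b p q : pos := head (0, 0) [seq x <- V b q | x \in HS b p].
Definition QS b p q : pos := last (0, 0) [seq x <- V b q | x \in HS b p].

Definition has_hNW (a : 'I_(nT Q)) (S : seq pos) : Prop :=
  exists R p'', [/\ R \in S, 0 < p'' <= uT Q a, nw_corner R (H a p'') &
    exists x : Lpt Q, [/\ inC x, tgt Q x.2 = a & psiT x = R]].
Definition has_vNW (b : 'I_(nS Q)) (S : seq pos) : Prop :=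
  exists R q'', [/\ R \in S, 0 < q'' <= uS Q b, nw_corner R (V b q'') &
    exists x : Lpt Q, [/\ inC x, src Q x.2 = b & psiS x = R]].

End Defs.

(* Both parts are one statement about disjoint lattice paths H_1, ..., H_u, H_p ending on
   row p of the last column, crossed by lattice paths W_1, ..., W_v, ordered from west to
   east, that run through every row and, by straightness, contain every SE corner of the
   H_p; part (b) is part (a) for the transposed matrix with all paths read backwards.
   By downward induction on p, H_p meets W_q (q > p + v - u) only on row p: a dip of H_p
   below row p forces an SE corner of H_{p+1} south-east of it, which lies on some W_q'
   with q' > q, against the induction hypothesis. The SE corner below the point where H_p
   enters row p shows in the same way that W_q (q >= p + v - u) reaches row p on H_p. So
   the last crossing of H_{p+1} and W_q is on row p+1, and from there W_q steps north onto
   H_p: this is the first crossing of H_p and W_q. East of it, an NW corner on row p would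
   force H_p through that crossing point of H_{p+1}. *)

From mathcomp Require Import all_boot zify.

Set Implicit Arguments.
Unset Strict Implicit.
Unset Printing Implicit Defensive.

Lemma head_in (T : eqType) (d x : T) (s : seq T) : x \in s -> head d s \in s.
Proof. by case: s => // y s _; exact: mem_head. Qed.

Lemma last_in (T : eqType) (d x : T) (s : seq T) : x \in s -> last d s \in s.
Proof. by case: s => // y s _ /=; exact: mem_last. Qed.

Definition le_NE (x y : pos) : bool := (y.1 <= x.1) && (x.2 <= y.2).

Lemma le_NE_refl : reflexive le_NE.
Proof. by move=> x; rewrite /le_NE !leqnn. Qed.

Lemma le_NE_trans : transitive le_NE.
Proof. by move=> y x z /andP[? ?] /andP[? ?]; apply/andP; lia. Qed.

Lemma lstep_cases x y : lstep x y -> y = (x.1, x.2.+1) \/ y = (x.1.-1, x.2) /\ 0 < x.1.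
Proof.
case: x y => [a b] [c d]; rewrite /lstep /= => /orP[/andP[/eqP-> /eqP->]|/andP[/eqP ? /eqP->]].
  by left.
by right; split; [congr pair|]; lia.
Qed.

Lemma lstep_le_NE x y : lstep x y -> le_NE x y.
Proof. by case/lstep_cases => [|[]] -> /=; rewrite /le_NE /=; lia. Qed.

Lemma lpath_pairwise (s : seq pos) : sorted lstep s -> pairwise le_NE s.
Proof. by rewrite -(sorted_pairwise le_NE_trans); exact: (sub_sorted lstep_le_NE). Qed.

Lemma lpath_behead (x : pos) (s : seq pos) : sorted lstep (x :: s) -> sorted lstep s.
Proof. by case: s => //= y s /andP[]. Qed.

Lemma lpath_head_le (x : pos) (s : seq pos) (y : pos) :
  sorted lstep (x :: s) -> y \in x :: s -> le_NE x y.
Proof.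
move=> /lpath_pairwise /= /andP[/allP hx _]; rewrite inE => /orP[/eqP->|/hx //].
exact: le_NE_refl.
Qed.

Lemma pairwise_le_NE_total (s : seq pos) (y z : pos) :
  pairwise le_NE s -> y \in s -> z \in s -> le_NE y z || le_NE z y.
Proof.
elim: s => // x s IH /= /andP[hx hs]; rewrite !inE => /orP[/eqP->|hy] /orP[/eqP->|hz].
- by rewrite le_NE_refl.
- by rewrite (allP hx _ hz).
- by rewrite (allP hx _ hy) orbT.
- exact: IH.
Qed.

Lemma lpath_north_east (s : seq pos) (y z : pos) :
  sorted lstep s -> y \in s -> z \in s -> z.1 < y.1 -> y.2 <= z.2.
Proof.
move=> /lpath_pairwise hs hy hz lt.
by case/orP: (pairwise_le_NE_total hs hy hz) => /andP[? ?]; lia.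
Qed.

Lemma lpath_east_north (s : seq pos) (y z : pos) :
  sorted lstep s -> y \in s -> z \in s -> y.2 < z.2 -> z.1 <= y.1.
Proof.
move=> /lpath_pairwise hs hy hz lt.
by case/orP: (pairwise_le_NE_total hs hy hz) => /andP[? ?]; lia.
Qed.

Lemma pairwise_le_NE_head (s : seq pos) (d y : pos) :
  pairwise le_NE s -> y \in s -> le_NE (head d s) y.
Proof.
case: s => // x s /= /andP[hx _]; rewrite inE => /orP[/eqP->|/(allP hx) //].
exact: le_NE_refl.
Qed.

Lemma pairwise_le_NE_last (s : seq pos) (d y : pos) :
  pairwise le_NE s -> y \in s -> le_NE y (last d s).
Proof.
elim: s d => // x s IH d /= /andP[hx hs]; rewrite inE => /orP[/eqP->|/IH -> //].
case: s {IH hs} hx => [|z s] hz; first exact: le_NE_refl.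
by apply: (allP hz) => /=; exact: mem_last.
Qed.

Lemma lpath_row_cover (x : pos) (s : seq pos) i :
  sorted lstep (x :: s) -> (last x s).1 <= i <= x.1 -> exists2 y : pos, y \in x :: s & y.1 = i.
Proof.
elim: s x => [|x' s IH] x /=; first by move=> _ hi; exists x; [rewrite inE | lia].
move=> /andP[hs hp] hi.
have [->|ne] := eqVneq i x.1; first by exists x; rewrite ?inE ?eqxx.
have [y hy <-] : exists2 y : pos, y \in x' :: s & y.1 = i.
  have : i <= x'.1 by case/lstep_cases: hs => [|[]] -> /= *; lia.
  by move=> ?; apply: IH => //; lia.
by exists y; rewrite // inE hy orbT.
Qed.

Lemma lpath_col_cover (x : pos) (s : seq pos) j :
  sorted lstep (x :: s) -> x.2 <= j <= (last x s).2 -> exists2 y : pos, y \in x :: s & y.2 = j.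
Proof.
elim: s x => [|x' s IH] x /=; first by move=> _ hj; exists x; [rewrite inE | lia].
move=> /andP[hs hp] hj.
have [->|ne] := eqVneq j x.2; first by exists x; rewrite ?inE ?eqxx.
have [y hy <-] : exists2 y : pos, y \in x' :: s & y.2 = j.
  have : x'.2 <= j by case/lstep_cases: hs => [|[]] -> /= *; lia.
  by move=> ?; apply: IH => //; lia.
by exists y; rewrite // inE hy orbT.
Qed.

Lemma lpath_row_segment (s : seq pos) (y z : pos) j : sorted lstep s -> y \in s -> z \in s ->
  y.1 = z.1 -> y.2 <= j <= z.2 -> (y.1, j) \in s.
Proof.
elim: s y z => // a s IH y z hs; rewrite !inE => /orP[/eqP ey|hy] /orP[/eqP ez|hz] e hj.
- subst; have -> : j = a.2 by lia.
  by rewrite -surjective_pairing eqxx.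
- subst y; have [->|ne] := eqVneq j a.2; first by rewrite -surjective_pairing eqxx.
  case: s IH hs hz => // b s IH /= /andP[hab hs] hz.
  have hbz := lpath_head_le hs hz.
  case/lstep_cases: hab => [eb|[eb ?]]; last by move: hbz; rewrite /le_NE eb /=; lia.
  have := IH b z hs (mem_head _ _) hz; rewrite eb /= => /(_ e) h.
  by rewrite h ?orbT //; lia.
- subst z; have /andP[? ?] : le_NE a y by apply: lpath_head_le hs _; rewrite inE hy orbT.
  have -> : j = y.2 by lia.
  by rewrite -surjective_pairing hy orbT.
- by rewrite (IH y z (lpath_behead hs)) ?orbT.
Qed.

Lemma lpath_col_segment (s : seq pos) (y z : pos) i : sorted lstep s -> y \in s -> z \in s ->
  y.2 = z.2 -> z.1 <= i <= y.1 -> (i, y.2) \in s.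
Proof.
elim: s y z => // a s IH y z hs; rewrite !inE => /orP[/eqP ey|hy] /orP[/eqP ez|hz] e hi.
- subst; have -> : i = a.1 by lia.
  by rewrite -surjective_pairing eqxx.
- subst y; have [->|ne] := eqVneq i a.1; first by rewrite -surjective_pairing eqxx.
  case: s IH hs hz => // b s IH /= /andP[hab hs] hz.
  have hbz := lpath_head_le hs hz.
  case/lstep_cases: hab => [eb|[eb ?]]; first by move: hbz; rewrite /le_NE eb /=; lia.
  have := IH b z hs (mem_head _ _) hz; rewrite eb /= => /(_ e) h.
  by rewrite h ?orbT //; lia.
- subst z; have /andP[? ?] : le_NE a y by apply: lpath_head_le hs _; rewrite inE hy orbT.
  have -> : i = y.1 by lia.
  by rewrite -surjective_pairing hy orbT.
- by rewrite (IH y z (lpath_behead hs)) ?orbT.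
Qed.

Lemma lpath_row_entry (x : pos) (s : seq pos) r : sorted lstep (x :: s) ->
  (last x s).1 <= r < x.1 -> exists2 z : pos, z \in x :: s & z.1 = r /\ (r.+1, z.2) \in x :: s.
Proof.
elim: s x => [|x' s IH] x /=; first by lia.
move=> /andP[hs hp] hr.
have IH' : x'.1 > r ->
    exists2 z : pos, z \in x :: x' :: s & z.1 = r /\ (r.+1, z.2) \in x :: x' :: s.
  move=> lt; have [z hz [h1 h2]] := IH x' hp ltac:(lia).
  by exists z; [rewrite in_cons hz orbT | split=> //; rewrite in_cons h2 orbT].
case/lstep_cases: hs => [ex'|[ex' x0]]; first by apply: IH'; rewrite ex' /=; lia.
have [er|ner] := eqVneq x'.1 r; last by apply: IH'; rewrite ex' /= in ner *; lia.
exists x'; first by rewrite !inE eqxx orbT.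
split=> //; rewrite inE; apply/orP; left; apply/eqP.
by rewrite ex' /= [RHS]surjective_pairing; rewrite ex' /= in er; congr pair; lia.
Qed.

Lemma lpath_col_entry (x : pos) (s : seq pos) j (y : pos) : sorted lstep (x :: s) -> x.2 < j ->
  y \in x :: s -> y.2 = j ->
  exists2 e : pos, e \in x :: s & [/\ e.2 = j, (e.1, j.-1) \in x :: s & y.1 <= e.1].
Proof.
elim: s x => [|x' s IH] x /=; first by move=> _ hj; rewrite inE => /eqP->; lia.
move=> /andP[hs hp] hj; rewrite inE => /orP[/eqP->|hy] hyj; first by lia.
have [e|ne] := eqVneq x'.2 j.
  exists x'; first by rewrite !inE eqxx orbT.
  have /andP[hyx' _] := lpath_head_le hp hy.
  case/lstep_cases: hs => [ex|[ex _]]; last by move: e; rewrite ex /=; lia.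
  split=> //; rewrite inE; apply/orP; left; apply/eqP.
  by rewrite ex /= -e ex /= -surjective_pairing.
have hj' : x'.2 < j by case/lstep_cases: hs ne => [|[]] -> /=; lia.
have [e he [h1 h2 h3]] := IH x' hp hj' hy hyj.
by exists e; [rewrite in_cons he orbT | split=> //; rewrite in_cons h2 orbT].
Qed.

Lemma lpath_next (s : seq pos) (y z : pos) : sorted lstep s -> y \in s -> z \in s -> z.1 < y.1 ->
  exists2 y' : pos, lstep y y' & y' \in s.
Proof.
elim: s => // a s IH hs; rewrite !inE => /orP[/eqP ey|hy] /orP[/eqP ez|hz] hzy.
- by subst; lia.
- subst y; case: s IH hs hz => // b s _ /= /andP[hab _] _.
  by exists b; rewrite // !inE eqxx orbT.
- subst z; have /andP[? _] : le_NE a y by apply: lpath_head_le hs _; rewrite inE hy orbT.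
  by lia.
- have [y' h1 h2] := IH (lpath_behead hs) hy hz hzy.
  by exists y'; rewrite // inE h2 orbT.
Qed.

Lemma lpath_se_corner_below (x : pos) (s : seq pos) (z : pos) : sorted lstep (x :: s) ->
  z \in x :: s -> (z.1.+1, z.2) \in x :: s -> x.2 < z.2 ->
  exists R : pos, [/\ R.2 = z.2, z.1 < R.1 & se_corner R (x :: s)].
Proof.
elim: s x => [|x' s IH] x /=; first by move=> _; rewrite inE => /eqP->; lia.
move=> /andP[hs hp]; rewrite inE => /orP[/eqP->|hz]; first by lia.
rewrite inE => /orP[/eqP e|hzs] hxz; first by move: hxz; rewrite -e /=; lia.
have [hx'z|hzx'] := ltnP x'.2 z.2.
  have [R [h1 h2 h3]] := IH x' hp hz hzs hx'z.
  by exists R; split=> //; rewrite /se_corner infix_consl; apply/orP; right.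
have ex : x' = (x.1, x.2.+1) by case/lstep_cases: hs hzx' hxz => [//|[-> _]] /=; lia.
have ez2 : z.2 = x.2.+1 by move: hzx'; rewrite ex /=; lia.
have /andP[hzs1 _] := lpath_head_le hp hzs.
have hzx'' : z != x' by apply/eqP=> e; move: hzs1; rewrite -e /=; lia.
case: s IH hp hz hzs hzs1 => [|x'' s] _ hp; first by rewrite !inE (negbTE hzx'').
rewrite inE (negbTE hzx'') /= => hz _ hzs1.
move: hp => /= /andP[hs' hp].
have ex'' : x'' = (x'.1.-1, x'.2).
  case/lstep_cases: hs' => [e|[//]].
  have /andP[_ hx''z] := lpath_head_le hp hz.
  by move: hx''z ez2; rewrite e ex /=; lia.
exists x'; split; [by rewrite ex ez2 | by move: hzs1; rewrite ex /=; lia |].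
rewrite /se_corner infix_consl; apply/orP; left.
by rewrite ex'' ex /= -surjective_pairing !eqxx /=; case: (s).
Qed.

Definition south_of (t s : seq pos) : Prop :=
  forall x y : pos, x \in s -> y \in t -> x.2 = y.2 -> x.1 < y.1.

(* Induction on the column, comparing the points where the two paths enter it from the west. *)
Lemma lpath_disjoint_south_of (x0 y0 : pos) (A B : seq pos) :
  sorted lstep (x0 :: A) -> sorted lstep (y0 :: B) -> x0.2 = y0.2 -> x0.1 < y0.1 ->
  (forall z, z \in x0 :: A -> z \in y0 :: B -> False) -> south_of (y0 :: B) (x0 :: A).
Proof.
move=> hA hB ec er dis.
have base (x y : pos) :
    x \in x0 :: A -> y \in y0 :: B -> x.2 = y.2 -> x.2 <= x0.2 -> y.1 <= x.1 -> False.
  move=> hx hy e hj hle; have /andP[h1 h2] := lpath_head_le hA hx.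
  have ey0 : y0.2 = y.2 by lia.
  have hin := lpath_col_segment (i := x0.1) hB (mem_head _ _) hy ey0 ltac:(lia).
  by apply: (dis x0 (mem_head _ _)); rewrite [x0]surjective_pairing ec.
suff col j (x y : pos) :
    x \in x0 :: A -> y \in y0 :: B -> x.2 = j -> y.2 = j -> y.1 <= x.1 -> False.
  by move=> x y hx hy e; rewrite ltnNge; apply/negP; apply: col hx hy erefl (esym e).
elim: j x y => [|j IH] x y hx hy ex ey hle; first by apply: (base x y) => //; lia.
have [hj|hj] := leqP j.+1 x0.2; first by apply: (base x y) => //; lia.
have [ea hea [ea2 hwa hea1]] := lpath_col_entry hA hj hx ex.
have [eb heb [eb2 hwb heb1]] := lpath_col_entry hB (ltac:(rewrite -ec; exact: hj)) hy ey.
have [hab|hab] := leqP eb.1 ea.1; first exact: (IH (ea.1, j) (eb.1, j) hwa hwb).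
have hin := lpath_col_segment (i := ea.1) hB heb hy (etrans eb2 (esym ey)) ltac:(lia).
by apply: (dis ea hea); rewrite [ea]surjective_pairing ea2 -eb2.
Qed.

Definition left_of (w w' : seq pos) : bool :=
  all (fun y : pos => all (fun z : pos => (y.1 == z.1) ==> (y.2 < z.2)) w') w.

Lemma left_ofP (w w' : seq pos) :
  reflect (forall y z : pos, y \in w -> z \in w' -> y.1 = z.1 -> y.2 < z.2) (left_of w w').
Proof.
apply: (iffP allP) => [h y z hy hz e | h y hy].
  by have /allP/(_ z hz)/implyP := h y hy; apply; rewrite e.
by apply/allP => z hz; apply/implyP => /eqP; exact: h.
Qed.

Section LatticePath.
Variables (a b : nat) (sw ne : pos) (P : seq pos).
Hypothesis hP : lattice_path_def a b sw ne P.

Lemma lattice_path_cons : exists s, [/\ P = sw :: s, sorted lstep (sw :: s) & last sw s = ne].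
Proof.
move: hP; rewrite /lattice_path_def.
by case: P => [|x s] //= /and4P[/eqP-> hs /eqP hl _]; exists s.
Qed.

Lemma lattice_path_sorted : sorted lstep P.
Proof. by have [s [-> ? _]] := lattice_path_cons. Qed.

Lemma lattice_path_last : ne \in P.
Proof. by have [s [-> _ <-]] := lattice_path_cons; exact: mem_last. Qed.

Lemma lattice_path_inbox (y : pos) : y \in P -> inbox a b y.
Proof. by move: hP; rewrite /lattice_path_def; case: P => // x s /and4P[_ _ _ /allP]; apply. Qed.

Lemma lattice_path_le_NE (y : pos) : y \in P -> le_NE sw y /\ le_NE y ne.
Proof.
have [s [eP hs hl]] := lattice_path_cons; rewrite eP => hy.
split; first exact: lpath_head_le hs hy.
rewrite -hl -[last _ _]/(last (0, 0) (sw :: s)).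
exact: pairwise_le_NE_last (lpath_pairwise hs) hy.
Qed.

Lemma lattice_path_rows i : ne.1 <= i <= sw.1 -> exists2 y : pos, y \in P & y.1 = i.
Proof. by have [s [-> hs hl]] := lattice_path_cons => hi; apply: lpath_row_cover; rewrite ?hl. Qed.

End LatticePath.

Lemma mem_subpath_nth (s : seq pos) (x y R : pos) : R \in subpath_of s x y ->
  exists2 k, k < size s & [/\ R = nth (0, 0) s k, index x s <= k & k <= index y s].
Proof.
rewrite /subpath_of => /(nthP (0, 0)) [k]; rewrite size_drop size_take => hk <-.
have [hky hks] : index x s + k <= index y s /\ index x s + k < size s.
  (* [index] and [size] occur at two convertible types; naming them gives lia single atoms *)
  move: hk; rewrite /pos; set i := index x s; set j := index y s; set n := size s.
  by clearbody i j n; case: (ltnP j.+1 n) => ? /= ?; split; lia.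
rewrite nth_drop nth_take; last by lia.
by exists (index x s + k); rewrite // leq_addr.
Qed.

Lemma subpath_le_NE_head (s : seq pos) (x y R : pos) :
  pairwise le_NE s -> x \in s -> R \in subpath_of s x y -> le_NE x R /\ R \in s.
Proof.
move=> hs hx /mem_subpath_nth [k hk [-> hxk _]]; split; last exact: mem_nth.
rewrite -{1}(nth_index (0, 0) hx); move: hxk; rewrite leq_eqVlt => /orP[/eqP->|lt].
  exact: le_NE_refl.
by apply: (pairwiseP (0, 0) hs); rewrite ?inE ?index_mem.
Qed.

Lemma subpath_le_NE_last (s : seq pos) (x y R : pos) :
  pairwise le_NE s -> y \in s -> R \in subpath_of s x y -> le_NE R y /\ R \in s.
Proof.
move=> hs hy /mem_subpath_nth [k hk [-> _ hky]]; split; last exact: mem_nth.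
rewrite -[X in le_NE _ X](nth_index (0, 0) hy); move: hky; rewrite leq_eqVlt => /orP[/eqP->|lt].
  exact: le_NE_refl.
by apply: (pairwiseP (0, 0) hs); rewrite ?inE ?index_mem.
Qed.

(* [H p] plays the role of H^alpha_p and [W q] that of V^alpha_q; transposed, they play
   V^beta_q and H^beta_p. *)
Section Crossing.
Variables (A B u : nat) (H : nat -> seq pos) (Ws : seq (seq pos)).
Local Notation v := (size Ws).
Local Notation W q := (nth [::] Ws q.-1).

Hypothesis u_le_v : u <= v.
Hypothesis H_path : forall p, 0 < p <= u -> lattice_path_def A B (A - u + p, 1) (p, B) (H p).
Hypothesis H_disj : forall p p', 0 < p -> p < p' -> p' <= u -> ~~ has (fun x => x \in H p') (H p).
Hypothesis W_path : forall w : seq pos, w \in Ws -> sorted lstep w.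
Hypothesis W_rows : forall w : seq pos, w \in Ws ->
  forall i, 0 < i <= A -> exists2 y : pos, y \in w & y.1 = i.
Hypothesis W_cols : forall w : seq pos, w \in Ws -> forall y : pos, y \in w -> 0 < y.2 <= B.
Hypothesis W_left : pairwise left_of Ws.
Hypothesis H_se_on_W : forall p (R : pos), 0 < p <= u -> se_corner R (H p) ->
  has (fun w : seq pos => R \in w) Ws.

Lemma H_sorted p : 0 < p <= u -> sorted lstep (H p).
Proof. by move/H_path/lattice_path_sorted. Qed.

Lemma H_box p (y : pos) : 0 < p <= u -> y \in H p ->
  [/\ p <= y.1 <= A - u + p, y.1 <= A & 0 < y.2 <= B].
Proof.
move=> hp hy; have := lattice_path_inbox (H_path hp) hy; rewrite /inbox => /andP[? ?].
have := lattice_path_le_NE (H_path hp) hy; rewrite /le_NE /= => -[/andP[? ?] /andP[? ?]].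
by split=> //; lia.
Qed.

Lemma H_disjoint p p' (y : pos) : 0 < p <= u -> 0 < p' <= u -> p != p' ->
  y \in H p -> y \in H p' -> False.
Proof.
move=> hp hp' /negPf ne hy hy'; case: ltngtP ne => // lt _.
  by move: (H_disj (p := p) (p' := p')) => /(_ _ lt _) /hasP; apply; [lia | lia | exists y].
by move: (H_disj (p := p') (p' := p)) => /(_ _ lt _) /hasP; apply; [lia | lia | exists y].
Qed.

Lemma H_south_of p p' : 0 < p -> p < p' -> p' <= u -> south_of (H p') (H p).
Proof.
move=> p0 pp' p'u.
have hp : 0 < p <= u by rewrite p0 (ltnW (leq_trans pp' p'u)).
have hp' : 0 < p' <= u by rewrite (ltn_trans p0 pp') p'u.
have [s [es hs _]] := lattice_path_cons (H_path hp).
have [t [et ht _]] := lattice_path_cons (H_path hp').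
rewrite es et; apply: lpath_disjoint_south_of => //=; first by rewrite ltn_add2l.
by move=> z; rewrite -es -et => hz hz'; move/hasP: (H_disj p0 pp' p'u); apply; exists z.
Qed.

Lemma W_mem q : 0 < q <= v -> W q \in Ws.
Proof. by case: q => // q /andP[_ h]; apply: mem_nth. Qed.

Lemma W_lt q q' (y z : pos) : 0 < q -> q < q' <= v -> y \in W q -> z \in W q' ->
  y.1 = z.1 -> y.2 < z.2.
Proof.
move=> q0 /andP[qq' q'v]; have /left_ofP : left_of (W q) (W q').
  by apply: (pairwiseP [::] W_left); rewrite ?inE; lia.
exact.
Qed.

Lemma H_se_corner_on_W p (R : pos) : 0 < p <= u -> se_corner R (H p) ->
  exists2 q, 0 < q <= v & R \in W q.
Proof.
move=> hp /(H_se_on_W hp) /hasP[w hw hR].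
by exists (index w Ws).+1; rewrite /= ?index_mem ?nth_index.
Qed.

Lemma W_west_of q' q (x R : pos) : 0 < q' <= q -> q <= v -> x \in W q -> R \in W q' ->
  x.1 < R.1 <= A -> R.2 <= x.2.
Proof.
move=> hq' hq hx hR hxR.
have hWq := W_path (W_mem (q := q) ltac:(lia)).
have [eq|ne] := eqVneq q' q; first by subst q'; apply: lpath_north_east hWq hR hx _; lia.
have [w hw ew] := W_rows (W_mem (q := q) ltac:(lia)) (i := R.1) ltac:(lia).
have := W_lt (q := q') (q' := q) ltac:(lia) ltac:(lia) hR hw (esym ew).
have := lpath_north_east hWq hw hx ltac:(lia); lia.
Qed.

Lemma W_east_of q' q (R : pos) i : 0 < q' <= q -> q <= v -> R \in W q' -> 0 < i < R.1 -> i <= A ->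
  exists2 w : pos, w \in W q & w.1 = i /\ R.2 <= w.2.
Proof.
move=> hq' hq hR hi hiA.
have [x hx ex] := W_rows (W_mem (q := q') ltac:(lia)) (i := i) ltac:(lia).
have hRx := lpath_north_east (W_path (W_mem (q := q') ltac:(lia))) hR hx ltac:(lia).
have [eq|ne] := eqVneq q' q; first by subst q'; exists x.
have [w hw ew] := W_rows (W_mem (q := q) ltac:(lia)) (i := i) ltac:(lia).
exists w => //; split=> //.
by have := W_lt (q := q') (q' := q) ltac:(lia) ltac:(lia) hx hw (etrans ex (esym ew)); lia.
Qed.

(* [H p.+1] passes strictly below [x] and climbs back to row [x.1] east of [x]; that climb
   starts at an SE corner. *)
Lemma H_se_corner_south_east p (x : pos) : 0 < p < u -> x \in H p -> p < x.1 ->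
  exists R : pos, [/\ se_corner R (H p.+1), x.1 < R.1 & x.2 < R.2].
Proof.
move=> hp hx hpx.
have hp1 : 0 < p.+1 <= u by lia.
have [/andP[_ hxA] _ /andP[hx2 hxB]] := H_box (p := p) ltac:(lia) hx.
have [s [es hs hl]] := lattice_path_cons (H_path hp1).
have [y hy ey] : exists2 y : pos, y \in H p.+1 & y.2 = x.2.
  by rewrite es; apply: lpath_col_cover => //; rewrite hl /=; lia.
have hxy := H_south_of (p := p) (p' := p.+1) ltac:(lia) (ltnSn p) ltac:(lia) hx hy (esym ey).
have [/andP[_ hyA] _ _] := H_box hp1 hy.
have [z hz [ez1 hz']] := lpath_row_entry (r := x.1) hs ltac:(rewrite hl /=; lia).
rewrite -es in hz hz'.
have hxz : x.2 < z.2.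
  have := lpath_north_east (H_sorted hp1) hy hz ltac:(lia); rewrite ey leq_eqVlt => /orP[/eqP e|//].
  have exz : x = z by rewrite [x]surjective_pairing [z]surjective_pairing ez1 e.
  by subst z; case: (H_disjoint (p := p) (p' := p.+1) (y := x)); rewrite ?neq_ltn ?ltnSn //; lia.
rewrite es in hz hz'.
have hz'' : (z.1.+1, z.2) \in (A - u + p.+1, 1) :: s by rewrite ez1.
have [R [eR2 hR1 hcR]] := lpath_se_corner_below hs hz hz'' ltac:(rewrite /=; lia).
by exists R; rewrite es; split=> //; lia.
Qed.

Lemma H_W_row_le p q (x : pos) : 0 < p <= u -> p + (v - u) < q <= v ->
  x \in H p -> x \in W q -> x.1 <= p.
Proof.
move: {2}(u - p) (erefl (u - p)) => k.
elim: k p q x => [|k IH] p q x ek hp hq hx hxq; first by lia.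
rewrite leqNgt; apply/negP => hpx.
have [R [hcR hxR hxR2]] := H_se_corner_south_east (p := p) ltac:(lia) hx hpx.
have hp1 : 0 < p.+1 <= u by lia.
have hR : R \in H p.+1 by apply: (mem_infix hcR); rewrite !inE eqxx !orbT.
have [_ hRA _] := H_box hp1 hR.
have [q' hq' hRq'] := H_se_corner_on_W hp1 hcR.
have [hqq'|hqq'] := leqP q' q.
  by have := W_west_of (q' := q') (q := q) ltac:(lia) ltac:(lia) hxq hRq' ltac:(lia); lia.
by have := IH p.+1 q' R ltac:(lia) hp1 ltac:(lia) hR hRq'; lia.
Qed.

Lemma H_last_row_entry p : 0 < p <= u -> exists2 z : pos, z \in H p &
  z.1 = p /\ (z.2 = 1 \/ exists R : pos, [/\ se_corner R (H p), R.2 = z.2 & p < R.1]).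
Proof.
move=> hp; have [s [es hs hl]] := lattice_path_cons (H_path hp).
have [ea|ne] := eqVneq (A - u + p) p.
  by exists (A - u + p, 1); [rewrite es mem_head | split=> //; left].
have [z hz [ez1 hz']] := lpath_row_entry (r := p) hs ltac:(rewrite hl /=; lia).
rewrite -es in hz; exists z => //; split=> //.
have [->|z2] := eqVneq z.2 1; [by left | right].
have [_ _ /andP[z0 _]] := H_box hp hz.
rewrite es in hz; have hz'' : (z.1.+1, z.2) \in (A - u + p, 1) :: s by rewrite ez1.
have [R [eR2 hR1 hcR]] := lpath_se_corner_below hs hz hz'' ltac:(rewrite /=; lia).
by exists R; rewrite es; split=> //; lia.
Qed.

Lemma W_meets_H_last_row p q : 0 < p <= u -> p + (v - u) <= q <= v ->
  exists2 w : pos, w \in W q & w.1 = p /\ w \in H p.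
Proof.
move=> hp hq.
have [z hz [ez1 hz2]] := H_last_row_entry hp.
have [_ hzA _] := H_box hp hz.
have hWq := W_mem (q := q) ltac:(lia).
have [w hw [ew1 hzw]] : exists2 w : pos, w \in W q & w.1 = p /\ z.2 <= w.2.
  case: hz2 => [z1|[R [hcR eR2 hpR]]].
    have [w hw ew] := W_rows hWq (i := p) ltac:(lia).
    by exists w; rewrite // z1; have := W_cols hWq hw; lia.
  have hR : R \in H p by apply: (mem_infix hcR); rewrite !inE eqxx !orbT.
  have [q' hq' hRq'] := H_se_corner_on_W hp hcR.
  have hq'q : q' <= q.
    rewrite leqNgt; apply/negP => lt.
    by have := H_W_row_le (q := q') hp ltac:(lia) hR hRq'; lia.
  have [_ hRA _] := H_box hp hR.
  rewrite -eR2; apply: W_east_of hRq' _ _ => //; lia.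
exists w => //; split=> //.
have /andP[_ hwB] := W_cols hWq hw.
have := lpath_row_segment (j := w.2) (H_sorted hp) hz (lattice_path_last (H_path hp)) ez1.
rewrite /=; move/(_ ltac:(lia)).
by rewrite ez1 -ew1 -surjective_pairing.
Qed.

Definition first_cross p q := head (0, 0) [seq x <- H p | x \in W q].
Definition last_cross p q := last (0, 0) [seq x <- H p | x \in W q].

Lemma cross_pairwise p q : 0 < p <= u -> pairwise le_NE [seq x <- H p | x \in W q].
Proof. by move=> hp; apply/pairwise_filter/lpath_pairwise/H_sorted. Qed.

Lemma last_cross_spec p q : 0 < p <= u -> p + (v - u) <= q <= v ->
  [/\ (last_cross p q).1 = p, last_cross p q \in H p & last_cross p q \in W q].
Proof.
move=> hp hq; have [w hw [ew1 hwH]] := W_meets_H_last_row hp hq.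
have hwf : w \in [seq x <- H p | x \in W q] by rewrite mem_filter hw hwH.
have := pairwise_le_NE_last (0, 0) (cross_pairwise q hp) hwf.
rewrite -/(last_cross p q) => /andP[hlw _].
have := last_in (0, 0) hwf; rewrite mem_filter -/(last_cross p q) => /andP[hW hH].
by have [/andP[? _] _ _] := H_box hp hH; split=> //; lia.
Qed.

(* From the last crossing of [H p.+1] with [W q], the path [W q] must go north (going east it
   would cross [H p.+1] again), and the point it reaches lies on [H p]. *)
Lemma last_cross_north p q : 0 < p < u -> p.+1 + (v - u) <= q <= v ->
  (p, (last_cross p.+1 q).2) \in W q /\ (p, (last_cross p.+1 q).2) \in H p.
Proof.
move=> hp hq.
have [hp0 hpu] : 0 < p /\ p < u by lia.
have hp1 : 0 < p.+1 <= u by lia.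
have hWq := W_mem (q := q) ltac:(lia).
have [eQ1 hQ1H hQ1W] := last_cross_spec (q := q) hp1 ltac:(lia).
set Q1 := last_cross p.+1 q in eQ1 hQ1H hQ1W *.
have [_ hQ1A /andP[? hQ1B]] := H_box hp1 hQ1H.
have [w hw ew] := W_rows hWq (i := p) ltac:(lia).
have [y' hst hy'] := lpath_next (W_path hWq) hQ1W hw ltac:(lia).
have ey' : y' = (p, Q1.2).
  case/lstep_cases: hst => [e|[-> _]]; last by rewrite eQ1.
  have hy'H : y' \in H p.+1.
    have := lpath_row_segment (j := Q1.2.+1) (H_sorted hp1) hQ1H
      (lattice_path_last (H_path hp1)) eQ1.
    by rewrite e eQ1; apply; have := W_cols hWq hy'; rewrite e /=; lia.
  have hf : y' \in [seq x <- H p.+1 | x \in W q] by rewrite mem_filter hy'H hy'.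
  have := pairwise_le_NE_last (0, 0) (cross_pairwise q hp1) hf.
  by rewrite -/(last_cross p.+1 q) -/Q1 /le_NE e /=; lia.
split; first by rewrite -ey'.
have [s [es hs hl]] := lattice_path_cons (H_path (p := p) ltac:(lia)).
have [h hh eh] : exists2 h : pos, h \in H p & h.2 = Q1.2.
  by rewrite es; apply: lpath_col_cover => //; rewrite hl /=; lia.
have [/andP[? _] _ _] := H_box (p := p) ltac:(lia) hh.
have := H_south_of (p' := p.+1) hp0 (ltnSn p) hpu hh hQ1H eh; rewrite eQ1 => ?.
suff -> : (p, Q1.2) = h by [].
by rewrite [h]surjective_pairing eh; congr pair; lia.
Qed.

Lemma first_cross_eq p q : 0 < p < u -> p.+1 + (v - u) <= q <= v ->
  first_cross p q = (p, (last_cross p.+1 q).2).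
Proof.
move=> hp hq.
have hp' : 0 < p <= u by lia.
have hWq := W_mem (q := q) ltac:(lia).
have [hcW hcH] := last_cross_north hp hq.
have [eQ1 _ hQ1W] := last_cross_spec (p := p.+1) (q := q) ltac:(lia) ltac:(lia).
have hcf : (p, (last_cross p.+1 q).2) \in [seq x <- H p | x \in W q] by rewrite mem_filter hcW hcH.
have := head_in (0, 0) hcf; rewrite mem_filter -/(first_cross p q) => /andP[hPW hPH].
have := pairwise_le_NE_head (0, 0) (cross_pairwise q hp') hcf.
rewrite -/(first_cross p q) => /andP[hP1 hP2]; rewrite /= in hP1 hP2.
have := H_W_row_le hp' (_ : p + (v - u) < q <= v) hPH hPW.
have [/andP[? _] _ _] := H_box hp' hPH => /(_ ltac:(lia)) hP1'.
have := lpath_north_east (W_path hWq) hQ1W hPW; rewrite eQ1 => /(_ ltac:(lia)) hP2'.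
by rewrite [first_cross p q]surjective_pairing; congr pair; lia.
Qed.

(* An NW corner [R] of some [H p''] on row [p] would need [(p.+1, R.2)] on [H p]; east of the
   first crossing this point would be [last_cross p.+1 q], which lies on [H p.+1]. *)
Lemma no_nw_corner_east_of_first_cross p q (R : pos) p'' : 0 < p < u -> p.+1 + (v - u) <= q <= v ->
  R \in H p -> R.1 = p -> (first_cross p q).2 <= R.2 -> 0 < p'' <= u -> ~~ nw_corner R (H p'').
Proof.
move=> hp hq hR eR1 hR2 hp''; apply/negP => hc.
have hp' : 0 < p <= u by lia.
have hRp'' : R \in H p'' by apply: (mem_infix hc); rewrite !inE eqxx !orbT.
have hs : (R.1.+1, R.2) \in H p'' by apply: (mem_infix hc); rewrite !inE eqxx.
have [epp|ne] := eqVneq p'' p; last first.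
  by apply: (H_disjoint (p := p) (p' := p'') (y := R)); rewrite // eq_sym.
subst p''.
have [_ hcH] := last_cross_north hp hq.
have [eQ1 hQ1H _] := last_cross_spec (p := p.+1) (q := q) ltac:(lia) ltac:(lia).
rewrite first_cross_eq // in hR2.
have /= := lpath_east_north (H_sorted hp') hcH hs; rewrite eR1 => hle.
have eR2 : R.2 = (last_cross p.+1 q).2.
  by apply/eqP; rewrite eqn_leq hR2 andbT leqNgt; apply/negP => /hle; lia.
apply: (H_disjoint (p := p) (p' := p.+1) (y := last_cross p.+1 q));
  rewrite ?neq_ltn ?ltnSn //; try lia.
by rewrite [last_cross p.+1 q]surjective_pairing eQ1 -eR2 -{1}eR1.
Qed.

Theorem crossing_rows p : 0 < p <= u ->
  (forall q, p + (v - u) <= q <= v -> (last_cross p q).1 = p /\ last_cross p q \in H p) /\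
  (forall q, p.+1 + (v - u) <= q <= v ->
     [/\ (first_cross p q).1 = p, first_cross p q \in H p,
         ((first_cross p q).1.+1, (first_cross p q).2) = last_cross p.+1 q &
         forall R : pos, R \in H p -> R.1 = p -> (first_cross p q).2 <= R.2 ->
           forall p'', 0 < p'' <= u -> ~~ nw_corner R (H p'')]).
Proof.
move=> hp; split=> q hq; first by have [] := last_cross_spec hp hq.
have hpu : 0 < p < u by lia.
have [_ hcH] := last_cross_north hpu hq.
have [eQ1 _ _] := last_cross_spec (p := p.+1) (q := q) ltac:(lia) ltac:(lia).
have eP := first_cross_eq hpu hq.
rewrite eP; split=> //; first by rewrite [RHS]surjective_pairing eQ1.
by move=> R hR eR1 hR2 p''; apply: (no_nw_corner_east_of_first_cross hpu hq hR eR1); rewrite eP.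
Qed.

End Crossing.

Definition tpos (x : pos) : pos := (x.2, x.1).

(* Transposing the matrix and reading paths backwards turns the vertical paths [V] into paths
   shaped like the horizontal ones; this reduces part (b) to part (a). *)
Definition tpath (s : seq pos) : seq pos := map tpos (rev s).

Lemma tposK : involutive tpos. Proof. by case. Qed.

Lemma tpos_inj : injective tpos. Proof. exact: inv_inj tposK. Qed.

Lemma tpathK : involutive tpath.
Proof. by move=> s; rewrite /tpath -map_rev revK -map_comp (eq_map tposK) map_id. Qed.

Lemma mem_tpath (x : pos) (s : seq pos) : (x \in tpath s) = (tpos x \in s).
Proof. by rewrite /tpath -{1}(tposK x) (mem_map tpos_inj) mem_rev. Qed.

Lemma sorted_tpath (s : seq pos) : sorted lstep (tpath s) = sorted lstep s.
Proof.
rewrite /tpath sorted_map rev_sorted; apply: eq_sorted => -[a b] [c d].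
rewrite /relpre /lstep /tpos /=.
by apply/idP/idP => /orP[/andP[/eqP ? /eqP ?]|/andP[/eqP ? /eqP ?]]; apply/orP;
  [right | left | right | left]; apply/andP; split; apply/eqP; lia.
Qed.

Lemma prefix_map_inj (f : pos -> pos) (t s : seq pos) : injective f ->
  prefix (map f t) (map f s) = prefix t s.
Proof. by move=> inj; elim: t s => [|a t IH] [|b s] //=; rewrite (inj_eq inj) IH. Qed.

Lemma infix_map_inj (f : pos -> pos) (t s : seq pos) : injective f ->
  infix (map f t) (map f s) = infix t s.
Proof.
move=> inj; elim: s => [|b s IH]; first by case: t.
by rewrite [map f (b :: s)]/= !infix_consl IH (prefix_map_inj t (b :: s) inj).
Qed.

Lemma se_corner_tpath (R : pos) (s : seq pos) : se_corner R (tpath s) = se_corner (tpos R) s.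
Proof.
rewrite /se_corner /tpath.
have -> : [:: (R.1, R.2.-1); R; (R.1.-1, R.2)] =
  map tpos (rev [:: ((tpos R).1, (tpos R).2.-1); tpos R; ((tpos R).1.-1, (tpos R).2)]).
  by case: R.
by rewrite infix_map_inj ?infix_rev //; exact: tpos_inj.
Qed.

Lemma nw_corner_tpath (R : pos) (s : seq pos) : nw_corner R (tpath s) = nw_corner (tpos R) s.
Proof.
rewrite /nw_corner /tpath.
have -> : [:: (R.1.+1, R.2); R; (R.1, R.2.+1)] =
  map tpos (rev [:: ((tpos R).1.+1, (tpos R).2); tpos R; ((tpos R).1, (tpos R).2.+1)]).
  by case: R.
by rewrite infix_map_inj ?infix_rev //; exact: tpos_inj.
Qed.

Lemma filter_tpath (s t : seq pos) :
  [seq x <- tpath s | x \in tpath t] = tpath [seq x <- s | x \in t].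
Proof.
rewrite /tpath filter_map filter_rev; congr (map _ (rev _)); apply: eq_filter => x /=.
by rewrite mem_tpath tposK.
Qed.

Lemma head_tpath (s : seq pos) : head (0, 0) (tpath s) = tpos (last (0, 0) s).
Proof. by case/lastP: s => // s x; rewrite /tpath rev_rcons last_rcons. Qed.

Lemma last_tpath (s : seq pos) : last (0, 0) (tpath s) = tpos (head (0, 0) s).
Proof. by case: s => // x s; rewrite /tpath rev_cons map_rcons last_rcons. Qed.

Lemma nth_map_tpath (L : seq (seq pos)) i : nth [::] (map tpath L) i = tpath (nth [::] L i).
Proof.
have [lt|le] := ltnP i (size L); first by rewrite (nth_map [::]).
by rewrite !nth_default ?size_map.
Qed.

Lemma lattice_pathE a b sw ne (P : seq pos) : lattice_path_def a b sw ne P =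
  [&& P != [::], head (0, 0) P == sw, last (0, 0) P == ne, sorted lstep P & all (inbox a b) P].
Proof. by case: P => //= x s; congr andb; rewrite andbCA. Qed.

Lemma lattice_path_tpath a b sw ne (P : seq pos) : lattice_path_def a b sw ne P ->
  lattice_path_def b a (tpos ne) (tpos sw) (tpath P).
Proof.
rewrite !lattice_pathE => /and5P[hn /eqP hh /eqP hl hs hb].
rewrite head_tpath last_tpath hl hh sorted_tpath hs !eqxx /=; apply/andP; split.
  by case: P hn {hh hl hs hb} => // x s _; rewrite /tpath rev_cons map_rcons; case: (map _ _).
by apply/allP => x; rewrite mem_tpath => /(allP hb); rewrite /inbox /tpos /= andbC.
Qed.

Lemma left_of_tpath (s t : seq pos) : south_of t s -> left_of (tpath s) (tpath t).
Proof. by move=> h; apply/left_ofP => y z; rewrite !mem_tpath => hy hz /(h _ _ hy hz). Qed.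

Definition window (lo m off : nat) (P : seq pos) : seq pos :=
  [seq (x.1 - lo, off + x.2) | x <- P & lo < x.1 <= lo + m].

Lemma window_sorted lo m off (P : seq pos) : sorted lstep P -> sorted lstep (window lo m off P).
Proof.
move=> hs.
have hf : sorted lstep [seq x <- P | lo < x.1 <= lo + m].
  elim: P hs => // a P IH hs /=.
  have {}IH := IH (lpath_behead hs).
  case: ifP => ha //; case: P hs IH => [|c P] //= /andP[hac hs].
  case: ifP => hc /=; first by rewrite hac.
  (* rows never increase along a path, so once it leaves the strip it never returns *)
  suff -> : [seq x <- P | lo < x.1 <= lo + m] = [::] by [].
  rewrite (@eq_in_filter _ _ pred0) ?filter_pred0 // => y hy /=; apply/negbTE.
  have /andP[h1 _] : le_NE c y by apply: lpath_head_le hs _; rewrite inE hy orbT.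
  by move: hc h1; case/lstep_cases: hac => [|[]] -> /= *; lia.
rewrite /window sorted_map.
apply: (sub_in_sorted (P := fun x : pos => lo < x.1)) _ _ hf.
  move=> x y hx hy; rewrite /relpre /lstep /= in hx hy *.
  by move=> /orP[/andP[/eqP ? /eqP ?]|/andP[/eqP ? /eqP ?]]; apply/orP; [left|right];
    apply/andP; split; apply/eqP; lia.
by apply/allP => x; rewrite mem_filter => /andP[/andP[]].
Qed.

Lemma window_mem lo m off (P : seq pos) (x : pos) : x \in P -> lo < x.1 <= lo + m ->
  (x.1 - lo, off + x.2) \in window lo m off P.
Proof. by move=> h w; apply/mapP; exists x; rewrite // mem_filter w h. Qed.

Lemma window_memP lo m off (P : seq pos) (z : pos) : z \in window lo m off P ->
  exists2 x : pos, x \in P & lo < x.1 <= lo + m /\ z = (x.1 - lo, off + x.2).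
Proof. by move=> /mapP[x]; rewrite mem_filter => /andP[w h] ->; exists x. Qed.

Lemma window_rows lo m off (P : seq pos) :
  (forall i, lo < i <= lo + m -> exists2 y : pos, y \in P & y.1 = i) ->
  forall i, 0 < i <= m -> exists2 z : pos, z \in window lo m off P & z.1 = i.
Proof.
move=> h i hi; have [y hy ey] := h (lo + i) ltac:(lia).
by exists (y.1 - lo, off + y.2); [apply: window_mem | rewrite /=]; lia.
Qed.

Lemma window_cols lo m off (P : seq pos) B : (forall y : pos, y \in P -> 0 < y.2 <= B) ->
  forall z : pos, z \in window lo m off P -> off < z.2 <= off + B.
Proof. by move=> h z /window_memP[x hx [w ->]] /=; have := h x hx; lia. Qed.

Lemma window_left_of lo m off (P1 P2 : seq pos) :
  left_of P1 P2 -> left_of (window lo m off P1) (window lo m off P2).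
Proof.
move=> /left_ofP h; apply/left_ofP => y z.
move=> /window_memP[x hx [wx ->]] /window_memP[x' hx' [wx' ->]] /= e.
by have := h _ _ hx hx'; lia.
Qed.

Lemma big_pred_addn_le (I : eqType) (s : seq I) (P P' : pred I) (F : I -> nat) k :
  uniq s -> k \in s -> ~~ P k -> P' k -> subpred P P' ->
  \sum_(i <- s | P i) F i + F k <= \sum_(i <- s | P' i) F i.
Proof.
move=> us ks nPk P'k sub.
rewrite (big_mkcond P) (big_mkcond P') (bigD1_seq k) //= [X in _ <= X](bigD1_seq k) //=.
rewrite (negbTE nPk) P'k add0n addnC leq_add2l.
by apply: leq_sum => i _; case: ifP => // /sub ->.
Qed.

Lemma pairwise_left_of_flatten n (s : seq 'I_n) (L : 'I_n -> seq (seq pos)) (lo hi : 'I_n -> nat) :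
  pairwise (fun k k' : 'I_n => k < k') s ->
  (forall k, k \in s -> pairwise left_of (L k)) ->
  (forall k, k \in s -> forall w, w \in L k -> forall y : pos, y \in w -> lo k < y.2 <= hi k) ->
  (forall k k', k \in s -> k' \in s -> k < k' -> hi k <= lo k') ->
  pairwise left_of (flatten (map L s)).
Proof.
elim: s => // k s IH /= /andP[hk hs] hL hcols hsep.
rewrite pairwise_cat; apply/and3P; split.
- apply/allrelP => w w' hw /flattenP[ws /mapP[k' hk' ->] hw'].
  have hkk' : k' \in k :: s by rewrite inE hk' orbT.
  apply/left_ofP => y z hy hz _.
  have := hcols k (mem_head _ _) w hw y hy; have := hcols k' hkk' w' hw' z hz.
  by have := hsep k k' (mem_head _ _) hkk' (allP hk _ hk'); lia.
- exact/hL/mem_head.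
- apply: IH => // [k0 h | k0 h | k0 k1 h h' lt]; [apply: hL | apply: hcols | apply: hsep];
    by rewrite // inE ?h ?h' orbT.
Qed.

Lemma pairwise_map_iota (G : nat -> seq pos) a n :
  (forall i j, a <= i -> i < j -> j < a + n -> left_of (G i) (G j)) ->
  pairwise left_of (map G (iota a n)).
Proof.
move=> h; rewrite pairwise_map; apply/(pairwiseP 0) => i j; rewrite !inE size_iota => hi hj hij.
by rewrite /relpre !nth_iota //; apply: h; lia.
Qed.

Lemma pairwise_ltn_filter_enum n (P : pred 'I_n) :
  pairwise (fun k k' : 'I_n => k < k') [seq k <- enum 'I_n | P k].
Proof.
apply: pairwise_filter; rewrite -(pairwise_map val (fun i j => i < j)) val_enum_ord.
by rewrite -sorted_pairwise ?iota_ltn_sorted //; exact: ltn_trans.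
Qed.

Section Quiver.
Variables (Q : qdata) (H : 'I_(nT Q) -> nat -> seq pos) (V : 'I_(nS Q) -> nat -> seq pos).
Hypotheses (Hstd : standing Q) (Hrm : road_map Q H V) (Hst : straight Q H V).

Lemma mem_arrT a k : (k \in arrT Q a) = (tgt Q k == a).
Proof. by rewrite mem_filter mem_enum andbT. Qed.

Lemma mem_arrS b k : (k \in arrS Q b) = (src Q k == b).
Proof. by rewrite mem_filter mem_enum andbT. Qed.

Lemma colOff_bT k : colOff Q k + mS Q (src Q k) <= bT Q (tgt Q k).
Proof.
apply: (big_pred_addn_le (P' := predT)) => //.
- exact/filter_uniq/enum_uniq.
- by rewrite mem_arrT.
- by rewrite ltnn.
Qed.

Lemma rowOff_aS k : rowOff Q k + mT Q (tgt Q k) <= aS Q (src Q k).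
Proof.
apply: (big_pred_addn_le (P' := predT)) => //.
- exact/filter_uniq/enum_uniq.
- by rewrite mem_arrS.
- by rewrite ltnn.
Qed.

Lemma colOff_lt k k' : tgt Q k = tgt Q k' -> k < k' -> colOff Q k + mS Q (src Q k) <= colOff Q k'.
Proof.
move=> e lt; rewrite /colOff -e.
apply: (big_pred_addn_le (P' := fun i : 'I_(nr Q) => i < k')) => //.
- exact/filter_uniq/enum_uniq.
- by rewrite mem_arrT.
- by rewrite ltnn.
- by move=> i /= /ltn_trans; apply.
Qed.

Lemma rowOff_lt k k' : src Q k = src Q k' -> k < k' -> rowOff Q k + mT Q (tgt Q k) <= rowOff Q k'.
Proof.
move=> e lt; rewrite /rowOff -e.
apply: (big_pred_addn_le (P' := fun i : 'I_(nr Q) => i < k')) => //.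
- exact/filter_uniq/enum_uniq.
- by rewrite mem_arrS.
- by rewrite ltnn.
- by move=> i /= /ltn_trans; apply.
Qed.

Lemma H_lattice_path a p : 0 < p <= uT Q a ->
  lattice_path_def (aT Q a) (bT Q a) (aT Q a - uT Q a + p, 1) (p, bT Q a) (H a p).
Proof. by case: Hrm => h _; exact: h. Qed.

Lemma V_lattice_path b q : 0 < q <= uS Q b ->
  lattice_path_def (aS Q b) (bS Q b) (aS Q b, q) (1, bS Q b - uS Q b + q) (V b q).
Proof. by case: Hrm => _ [_ [h _]]; exact: h. Qed.

Lemma tV_lattice_path b q : 0 < q <= uS Q b ->
  lattice_path_def (bS Q b) (aS Q b) (bS Q b - uS Q b + q, 1) (q, aS Q b) (tpath (V b q)).
Proof. by move/V_lattice_path/lattice_path_tpath. Qed.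

Lemma tH_lattice_path a p : 0 < p <= uT Q a ->
  lattice_path_def (bT Q a) (aT Q a) (bT Q a, p) (1, aT Q a - uT Q a + p) (tpath (H a p)).
Proof. by move/H_lattice_path/lattice_path_tpath. Qed.

Lemma tV_disjoint b q q' : 0 < q -> q < q' -> q' <= uS Q b ->
  ~~ has (fun x => x \in tpath (V b q')) (tpath (V b q)).
Proof.
case: Hrm => _ [_ [_ hd]] h1 h2 h3; apply/hasP => -[x]; rewrite !mem_tpath => hx hx'.
by move/hasP: (hd b q q' h1 h2 h3); apply; exists (tpos x).
Qed.

Lemma V_left_of b i j : 0 < i -> i < j -> j <= uS Q b -> left_of (V b i) (V b j).
Proof.
move=> i0 ij ju; have := H_south_of (@tV_lattice_path b) (@tV_disjoint b) i0 ij ju.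
by move/left_of_tpath; rewrite !tpathK.
Qed.

Lemma V_cols b q : 0 < q <= uS Q b -> forall y : pos, y \in V b q -> 0 < y.2 <= bS Q b.
Proof. by move=> hq y /(lattice_path_inbox (V_lattice_path hq)) /andP[]. Qed.

Lemma VtoT_window k (P : seq pos) :
  VtoT Q k P = window (rowOff Q k) (mT Q (tgt Q k)) (colOff Q k) P.
Proof. by []. Qed.

Lemma VTs_memP a w : w \in VTs Q V a -> exists k, exists q,
  [/\ tgt Q k = a, 0 < q <= uS Q (src Q k) & w = VtoT Q k (V (src Q k) q)].
Proof.
move=> /allpairsPdep[k [q [hk hq ->]]]; exists k, q.
by move: hk hq; rewrite mem_arrT mem_iota => /eqP hk hq; split=> //; lia.
Qed.

Lemma VTs_memI k q : 0 < q <= uS Q (src Q k) -> VtoT Q k (V (src Q k) q) \in VTs Q V (tgt Q k).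
Proof.
by move=> hq; apply/allpairsPdep; exists k, q; rewrite mem_arrT mem_iota; split=> //; lia.
Qed.

Lemma size_VTs a : size (VTs Q V a) = vT Q a.
Proof.
rewrite /VTs size_flatten /shape -map_comp /vT sumnE big_map.
by apply: eq_bigr => k _; rewrite /= size_map size_iota.
Qed.

Lemma VTs_sorted a w : w \in VTs Q V a -> sorted lstep w.
Proof.
by move=> /VTs_memP[k [q [_ hq ->]]]; exact/window_sorted/lattice_path_sorted/V_lattice_path.
Qed.

Lemma VTs_rows a w : w \in VTs Q V a ->
  forall i, 0 < i <= aT Q a -> exists2 y : pos, y \in w & y.1 = i.
Proof.
move=> /VTs_memP[k [q [<- hq ->]]]; apply: window_rows => i; rewrite /aT => hi.
apply: (lattice_path_rows (V_lattice_path hq)) => /=; have := rowOff_aS k; lia.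
Qed.

Lemma VTs_cols a w : w \in VTs Q V a -> forall y : pos, y \in w -> 0 < y.2 <= bT Q a.
Proof.
move=> /VTs_memP[k [q [<- hq ->]]] y hy.
by have := window_cols (V_cols hq) hy; have := colOff_bT k; rewrite /bS; lia.
Qed.

Lemma VTs_left_of a : pairwise left_of (VTs Q V a).
Proof.
apply: (pairwise_left_of_flatten (lo := colOff Q) (hi := fun k => colOff Q k + mS Q (src Q k))).
- exact: pairwise_ltn_filter_enum.
- move=> k _; apply: pairwise_map_iota => i j hi hij hj.
  by rewrite !VtoT_window; apply/window_left_of/V_left_of; lia.
- move=> k _ w /mapP[q]; rewrite mem_iota => hq -> y hy.
  have hq' : 0 < q <= uS Q (src Q k) by lia.
  by move: y hy; rewrite VtoT_window; exact: window_cols (V_cols hq').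
- by move=> k k'; rewrite !mem_arrT => /eqP hk /eqP hk'; apply: colOff_lt; rewrite hk hk'.
Qed.

Lemma H_se_corner_in_VTs a p (R : pos) : 0 < p <= uT Q a -> se_corner R (H a p) ->
  has (fun w : seq pos => R \in w) (VTs Q V a).
Proof.
move=> hp hse; case: Hst => hst _.
have [x [hxL <- <- [q [hq hV]]]] := hst a p R hp ltac:(by rewrite /corner hse orbT).
apply/hasP; exists (VtoT Q x.2 (V (src Q x.2) q)); first exact: VTs_memI.
move: hxL; rewrite /inL VtoT_window => /andP[/andP[? ?] _].
have -> : psiT Q x = ((psiS Q x).1 - rowOff Q x.2, colOff Q x.2 + (psiS Q x).2).
  by rewrite /psiS /= addKn.
by apply: window_mem => //=; lia.
Qed.

Lemma target_crossing a p : 0 < p <= uT Q a ->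
     (forall q', p.+1 + (vT Q a - uT Q a) <= q' <= vT Q a ->
        (PT Q H V a p q').1 = p) /\
     (forall q', p + (vT Q a - uT Q a) <= q' <= vT Q a ->
        (QT Q H V a p q').1 = p) /\
     (forall q', p.+1 + (vT Q a - uT Q a) <= q' <= vT Q a ->
        ~ has_hNW Q H V a (subpath_of (H a p) (PT Q H V a p q') (QT Q H V a p q')) /\
        ((PT Q H V a p q').1.+1, (PT Q H V a p q').2) = QT Q H V a p.+1 q').
Proof.
move=> hp.
have uv : uT Q a <= size (VTs Q V a) by rewrite size_VTs; case: Hstd => h _; case: (h a).
have [hQ hP] := crossing_rows uv (@H_lattice_path a) (Hrm.2.1 a) (@VTs_sorted a) (@VTs_rows a)
  (@VTs_cols a) (VTs_left_of a) (@H_se_corner_in_VTs a) hp.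
rewrite size_VTs in hQ hP.
split; first by move=> q hq; have [] := hP q hq.
split; first by move=> q hq; have [] := hQ q hq.
move=> q hq; have [hP1 hPH hPQ hnw] := hP q hq; split=> // -[R [p'' [hR hp'' hc _]]].
have hsH := lpath_pairwise (lattice_path_sorted (H_lattice_path hp)).
have [/andP[hR1 hR2] hRH] := subpath_le_NE_head hsH hPH hR.
have [_ /andP[hpR _]] := lattice_path_le_NE (H_lattice_path hp) hRH.
by have := hnw R hRH ltac:(rewrite /= in hpR; lia) hR2 p'' hp''; rewrite hc.
Qed.

Lemma tH_cols a p : 0 < p <= uT Q a -> forall y : pos, y \in tpath (H a p) -> 0 < y.2 <= aT Q a.
Proof. by move=> hp y /(lattice_path_inbox (tH_lattice_path hp)) /andP[]. Qed.

Lemma tpath_HtoS k (P : seq pos) :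
  tpath (HtoS Q k P) = window (colOff Q k) (mS Q (src Q k)) (rowOff Q k) (tpath P).
Proof. by rewrite /tpath /HtoS /window -map_rev -filter_rev filter_map -!map_comp. Qed.

Lemma HSs_memP b w : w \in HSs Q H b -> exists k, exists p,
  [/\ src Q k = b, 0 < p <= uT Q (tgt Q k) & w = HtoS Q k (H (tgt Q k) p)].
Proof.
move=> /allpairsPdep[k [p [hk hp ->]]]; exists k, p.
by move: hk hp; rewrite mem_arrS mem_iota => /eqP hk hp; split=> //; lia.
Qed.

Lemma HSs_memI k p : 0 < p <= uT Q (tgt Q k) -> HtoS Q k (H (tgt Q k) p) \in HSs Q H (src Q k).
Proof.
by move=> hp; apply/allpairsPdep; exists k, p; rewrite mem_arrS mem_iota; split=> //; lia.
Qed.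

Lemma size_HSs b : size (HSs Q H b) = vS Q b.
Proof.
rewrite /HSs size_flatten /shape -map_comp /vS sumnE big_map.
by apply: eq_bigr => k _; rewrite /= size_map size_iota.
Qed.

Lemma tHSs_sorted b w : w \in map tpath (HSs Q H b) -> sorted lstep w.
Proof.
move=> /mapP[w0 /HSs_memP[k [p [_ hp ->]]] ->].
by rewrite tpath_HtoS; exact/window_sorted/lattice_path_sorted/tH_lattice_path.
Qed.

Lemma tHSs_rows b w : w \in map tpath (HSs Q H b) ->
  forall i, 0 < i <= bS Q b -> exists2 y : pos, y \in w & y.1 = i.
Proof.
move=> /mapP[w0 /HSs_memP[k [p [<- hp ->]]] ->]; rewrite tpath_HtoS.
apply: window_rows => i hi.
apply: (lattice_path_rows (tH_lattice_path hp)) => /=.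
by have := colOff_bT k; rewrite /bS in hi; lia.
Qed.

Lemma tHSs_cols b w : w \in map tpath (HSs Q H b) -> forall y : pos, y \in w -> 0 < y.2 <= aS Q b.
Proof.
move=> /mapP[w0 /HSs_memP[k [p [<- hp ->]]] ->] y; rewrite tpath_HtoS => hy.
by have := window_cols (tH_cols hp) hy; have := rowOff_aS k; rewrite /aT; lia.
Qed.

Lemma tHSs_left_of b : pairwise left_of (map tpath (HSs Q H b)).
Proof.
have -> : map tpath (HSs Q H b) =
    flatten [seq [seq tpath (HtoS Q k (H (tgt Q k) p)) | p <- iota 1 (uT Q (tgt Q k))]
            | k <- arrS Q b].
  by rewrite /HSs; elim: (arrS Q b) => //= k ks IH; rewrite map_cat IH -map_comp.
apply: (pairwise_left_of_flatten (lo := rowOff Q) (hi := fun k => rowOff Q k + mT Q (tgt Q k))).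
- exact: pairwise_ltn_filter_enum.
- move=> k _; apply: pairwise_map_iota => i j hi hij hj.
  rewrite !tpath_HtoS; apply/window_left_of/left_of_tpath.
  by apply: (H_south_of (@H_lattice_path _) (Hrm.2.1 _)); lia.
- move=> k _ w /mapP[p]; rewrite mem_iota => hp -> y; rewrite tpath_HtoS.
  have hp' : 0 < p <= uT Q (tgt Q k) by lia.
  by move: y; exact: window_cols (tH_cols hp').
- by move=> k k'; rewrite !mem_arrS => /eqP hk /eqP hk'; apply: rowOff_lt; rewrite hk hk'.
Qed.

Lemma tV_se_corner_in_tHSs b q (R : pos) : 0 < q <= uS Q b -> se_corner R (tpath (V b q)) ->
  has (fun w : seq pos => R \in w) (map tpath (HSs Q H b)).
Proof.
move=> hq; rewrite se_corner_tpath => hse; case: Hst => _ hst.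
have [x [hxL <- hpsi [p [hp hH]]]] := hst b q (tpos R) hq ltac:(by rewrite /corner hse orbT).
apply/hasP; exists (tpath (HtoS Q x.2 (H (tgt Q x.2) p))); first exact/map_f/HSs_memI.
rewrite mem_tpath -hpsi; move: hxL; rewrite /inL => /andP[_ /andP[? ?]].
apply/mapP; exists (psiT Q x); last by rewrite /psiT /psiS /= addKn.
by rewrite mem_filter hH /psiT /=; apply/andP; split; lia.
Qed.

Lemma first_cross_tpath b q p' :
  first_cross (fun q => tpath (V b q)) (map tpath (HSs Q H b)) q p' = tpos (QS Q H V b p' q).
Proof. by rewrite /first_cross nth_map_tpath filter_tpath head_tpath. Qed.

Lemma last_cross_tpath b q p' :
  last_cross (fun q => tpath (V b q)) (map tpath (HSs Q H b)) q p' = tpos (PS Q H V b p' q).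
Proof. by rewrite /last_cross nth_map_tpath filter_tpath last_tpath. Qed.

Lemma source_crossing b q : 0 < q <= uS Q b ->
     (forall p', q.+1 + (vS Q b - uS Q b) <= p' <= vS Q b ->
        (QS Q H V b p' q).2 = q) /\
     (forall p', q + (vS Q b - uS Q b) <= p' <= vS Q b ->
        (PS Q H V b p' q).2 = q) /\
     (forall p', q.+1 + (vS Q b - uS Q b) <= p' <= vS Q b ->
        ~ has_vNW Q H V b (subpath_of (V b q) (PS Q H V b p' q) (QS Q H V b p' q)) /\
        ((QS Q H V b p' q).1, (QS Q H V b p' q).2.+1) = PS Q H V b p' q.+1).
Proof.
move=> hq.
have uv : uS Q b <= size (map tpath (HSs Q H b)).
  by rewrite size_map size_HSs; case: Hstd => _ h; case: (h b).
have [hP hQ] := crossing_rows uv (@tV_lattice_path b) (@tV_disjoint b) (@tHSs_sorted b)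
  (@tHSs_rows b) (@tHSs_cols b) (tHSs_left_of b) (@tV_se_corner_in_tHSs b) hq.
rewrite size_map size_HSs in hP hQ.
split; first by move=> p' hp'; have [] := hQ p' hp'; rewrite first_cross_tpath.
split; first by move=> p' hp'; have [] := hP p' hp'; rewrite last_cross_tpath.
move=> p' hp'; have [] := hQ p' hp'; rewrite !first_cross_tpath last_cross_tpath mem_tpath tposK.
move=> hQ2 hQV [e1 e2] hnw; split; last by rewrite [RHS]surjective_pairing -e1 -e2.
move=> [R [q'' [hR hq'' hc _]]].
have hsV := lpath_pairwise (lattice_path_sorted (V_lattice_path hq)).
have [/andP[hR1 hR2] hRV] := subpath_le_NE_last hsV hQV hR.
have [/andP[_ hqR] _] := lattice_path_le_NE (V_lattice_path hq) hRV.
have hRt : tpos R \in tpath (V b q) by rewrite mem_tpath tposK.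
have eR2 : (tpos R).1 = q by rewrite /= in hQ2 hqR *; lia.
by have := hnw (tpos R) hRt eR2 hR1 q'' hq''; rewrite nw_corner_tpath tposK hc.
Qed.

End Quiver.

Theorem lemma3p3 (Q : qdata)
  (H : 'I_(nT Q) -> nat -> seq pos) (V : 'I_(nS Q) -> nat -> seq pos)
  (Hstd : standing Q) (Hrm : road_map Q H V) (Hst : straight Q H V) :
  (forall (a : 'I_(nT Q)) (p : nat), 0 < p <= uT Q a ->
     (forall q', p.+1 + (vT Q a - uT Q a) <= q' <= vT Q a ->
        (PT Q H V a p q').1 = p) /\
     (forall q', p + (vT Q a - uT Q a) <= q' <= vT Q a ->
        (QT Q H V a p q').1 = p) /\
     (forall q', p.+1 + (vT Q a - uT Q a) <= q' <= vT Q a ->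
        ~ has_hNW Q H V a (subpath_of (H a p) (PT Q H V a p q') (QT Q H V a p q')) /\
        ((PT Q H V a p q').1.+1, (PT Q H V a p q').2) = QT Q H V a p.+1 q')) /\
  (forall (b : 'I_(nS Q)) (q : nat), 0 < q <= uS Q b ->
     (forall p', q.+1 + (vS Q b - uS Q b) <= p' <= vS Q b ->
        (QS Q H V b p' q).2 = q) /\
     (forall p', q + (vS Q b - uS Q b) <= p' <= vS Q b ->
        (PS Q H V b p' q).2 = q) /\
     (forall p', q.+1 + (vS Q b - uS Q b) <= p' <= vS Q b ->
        ~ has_vNW Q H V b (subpath_of (V b q) (PS Q H V b p' q) (QS Q H V b p' q)) /\
        ((QS Q H V b p' q).1, (QS Q H V b p' q).2.+1) = PS Q H V b p' q.+1)).
Proof.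
split=> [a p hp | b q hq].
- exact: target_crossing.
- exact: source_crossing.
Qed.
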